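(* Let $M$ be a monoidal category and $C,D$ be $M$-actegories. Let $m\in M$, $\alpha:x\to m\odot_C y$ in $C$ and $\beta:m\odot_D v\to u$ in $D$, and let $l=\langle\alpha\mid\beta\rangle_m\in\mathit{Optic}_{C,D}((x,u),(y,v))$. Then the 2-cell $R_x\otimes L_u\Rightarrow R_y\otimes L_v$ in $\mathit{Tamb}_{C,D}$ corresponding to $l$ equals the composite $$R_x\otimes L_u\xrightarrow{R_\alpha\otimes L_\beta}R_{m\odot y}\otimes L_{m\odot v}\cong R_y\otimes R_m\otimes L_m\otimes L_v\xrightarrow{R_y\otimes\varepsilon_m\otimes L_v}R_y\otimes M(-,=)\otimes L_v\cong R_y\otimes L_v,$$ where $R_m,L_m\in\mathit{Tamb}_{M,M}$ are formed with $m$ regarded as an object of the $M$-actegory $M$, $\varepsilon_m:R_m\otimes L_m\Rightarrow M(-,=)$ is the 2-cell given by composition $\int^{n}M(k,n\otimes m)\times M(n\otimes m,k')\to M(k,k')$, the isomorphism $R_y\otimes R_m\cong R_{m\odot y}$ sends $(h,g)$ with $h:c\to n\odot y$, $g:n\to k\otimes m$ to $h;(g\odot y);a_{k,m,y}$, the isomorphism $L_m\otimes L_v\cong L_{m\odot v}$ sends $(g,h)$ with $g:k\otimes m\to n$, $h:n\odot v\to d$ to $a^{-1}_{k,m,v};(g\odot v);h$, and the remaining isomorphisms are bicategorical associators and unitors.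
   Context: $(M,\otimes,I,\lambda,a)$ is a monoidal category; an $M$-actegory is a category $C$ with a functor $\odot:M\times C\to C$ and coherent natural isomorphisms $\lambda_x:I\odot x\to x$, $a_{m,n,x}:(m\otimes n)\odot x\to m\odot(n\odot x)$; $M$ is an $M$-actegory via $\otimes$. Composition is diagrammatic ($f;g$ = $f$ then $g$). $\mathit{Optic}_{C,D}((x,u),(y,v))=\int^{m}C(x,m\odot y)\times D(m\odot v,u)$, elements $\langle\alpha\mid\beta\rangle_m$ modulo $\langle\alpha;(f\odot y)\mid\beta\rangle_m=\langle\alpha\mid(f\odot v);\beta\rangle_n$ for $f:n\to m$; composition $\langle\alpha\mid\beta\rangle_m;\langle\alpha'\mid\beta'\rangle_n=\langle\alpha;(m\odot\alpha');a^{-1}\mid a;(m\odot\beta');\beta\rangle_{m\otimes n}$, identity $\langle\lambda^{-1}_x\mid\lambda_u\rangle_I$. $\mathit{Tamb}$: the bicategory of $M$-actegories whose hom-category $\mathit{Tamb}_{C,D}$ consists of functors $P:C^{op}\times D\to\mathrm{Set}$ with compatible strength maps $P(c,d)\to P(m\odot c,m\odot d)$ and strength-preserving natural transformations; identity 1-cells are hom-profunctors; composition $(P\otimes Q)(c,e)=\int^{d}P(c,d)\times Q(d,e)$. For an actegory $E$ and $x\in E$: $R_x\in\mathit{Tamb}_{E,M}$ is $(c,n)\mapsto E(c,n\odot x)$; $L_x\in\mathit{Tamb}_{M,E}$ is $(n,c)\mapsto E(n\odot x,c)$ (strengths induced by the action and associator). For $f:x\to x'$ in $E$, $R_f:R_x\Rightarrow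 R_{x'}$ postcomposes with $n\odot f$, $L_f:L_{x'}\Rightarrow L_x$ precomposes with $n\odot f$. An optic $l:(x,u)\to(y,v)$ corresponds to the unique 2-cell $\theta:R_x\otimes L_u\Rightarrow R_y\otimes L_v$ whose $(x,u)$-component sends the identity optic $\mathrm{id}_{(x,u)}\in(R_x\otimes L_u)(x,u)=\mathit{Optic}_{C,D}((x,u),(x,u))$ to $l$ (this is a bijection). *)

(* Composition is diagrammatic: f >> g. *)
From Stdlib Require Import ClassicalEpsilon.

Set Implicit Arguments.
Unset Strict Implicit.

Record Cat := {
  ob :> Type;
  hom : ob -> ob -> Type;
  idm : forall a, hom a a;
  cmp : forall a b e, hom a b -> hom b e -> hom a e
}.
Arguments hom {c} _ _.
Arguments idm {c} _.
Arguments cmp {c a b e} _ _.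

Infix ">>" := cmp (at level 40, left associativity).

Definition is_cat (C : Cat) : Prop :=
  (forall (a b : C) (f : hom a b), idm a >> f = f) /\
  (forall (a b : C) (f : hom a b), f >> idm b = f) /\
  (forall (a b c d : C) (f : hom a b) (g : hom b c) (h : hom c d),
      (f >> g) >> h = f >> (g >> h)).

Record MonCat := {
  mcat :> Cat;
  tens : mcat -> mcat -> mcat;
  tensm : forall (a a' b b' : mcat), hom a a' -> hom b b' -> hom (tens a b) (tens a' b');
  munit : mcat;
  mlam : forall a : mcat, hom (tens munit a) a;
  mlami : forall a : mcat, hom a (tens munit a);
  mrho : forall a : mcat, hom (tens a munit) a;
  mrhoi : forall a : mcat, hom a (tens a munit);
  masc : forall a b c : mcat, hom (tens (tens a b) c) (tens a (tens b c));
  masci : forall a b c : mcat, hom (tens a (tens b c)) (tens (tens a b) c)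
}.
Arguments tens {m} _ _.
Arguments tensm {m a a' b b'} _ _.
Arguments munit {m}.
Arguments mlam {m} _.
Arguments mlami {m} _.
Arguments mrho {m} _.
Arguments mrhoi {m} _.
Arguments masc {m} _ _ _.
Arguments masci {m} _ _ _.

Definition is_moncat (M : MonCat) : Prop :=
  is_cat M /\
  (forall a b : M, tensm (idm a) (idm b) = idm (tens a b)) /\
  (forall (a a' a'' b b' b'' : M) (f : hom a a') (f' : hom a' a'')
          (g : hom b b') (g' : hom b' b''),
      tensm (f >> f') (g >> g') = tensm f g >> tensm f' g') /\
  (forall a : M, mlam a >> mlami a = idm _ /\ mlami a >> mlam a = idm _) /\
  (forall a : M, mrho a >> mrhoi a = idm _ /\ mrhoi a >> mrho a = idm _) /\
  (forall a b c : M, masc a b c >> masci a b c = idm _ /\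
                     masci a b c >> masc a b c = idm _) /\
  (forall (a b : M) (f : hom a b), tensm (idm munit) f >> mlam b = mlam a >> f) /\
  (forall (a b : M) (f : hom a b), tensm f (idm munit) >> mrho b = mrho a >> f) /\
  (forall (a a' b b' c c' : M) (f : hom a a') (g : hom b b') (h : hom c c'),
      tensm (tensm f g) h >> masc a' b' c' = masc a b c >> tensm f (tensm g h)) /\
  (forall a b c d : M,
      masc (tens a b) c d >> masc a b (tens c d) =
      tensm (masc a b c) (idm d) >> masc a (tens b c) d >> tensm (idm a) (masc b c d)) /\
  (forall a b : M, masc a munit b >> tensm (idm a) (mlam b) = tensm (mrho a) (idm b)).

Record Act (M : MonCat) := {
  acat :> Cat;
  act : M -> acat -> acat;
  actm : forall (m m' : M) (x x' : acat), hom m m' -> hom x x' -> hom (act m x) (act m' x');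
  alam : forall x : acat, hom (act munit x) x;
  alami : forall x : acat, hom x (act munit x);
  aasc : forall (m n : M) (x : acat), hom (act (tens m n) x) (act m (act n x));
  aasci : forall (m n : M) (x : acat), hom (act m (act n x)) (act (tens m n) x)
}.
Arguments act {M a} _ _.
Arguments actm {M a m m' x x'} _ _.
Arguments alam {M a} _.
Arguments alami {M a} _.
Arguments aasc {M a} _ _ _.
Arguments aasci {M a} _ _ _.

Definition is_act (M : MonCat) (C : Act M) : Prop :=
  is_cat C /\
  (forall (m : M) (x : C), actm (idm m) (idm x) = idm (act m x)) /\
  (forall (m m' m'' : M) (x x' x'' : C) (f : hom m m') (f' : hom m' m'')
          (g : hom x x') (g' : hom x' x''),
      actm (f >> f') (g >> g') = actm f g >> actm f' g') /\
  (forall x : C, alam x >> alami x = idm _ /\ alami x >> alam x = idm _) /\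
  (forall (m n : M) (x : C), aasc m n x >> aasci m n x = idm _ /\
                             aasci m n x >> aasc m n x = idm _) /\
  (forall (x x' : C) (f : hom x x'), actm (idm munit) f >> alam x' = alam x >> f) /\
  (forall (m m' n n' : M) (x x' : C) (f : hom m m') (g : hom n n') (h : hom x x'),
      actm (tensm f g) h >> aasc m' n' x' = aasc m n x >> actm f (actm g h)) /\
  (forall (m n p : M) (x : C),
      aasc (tens m n) p x >> aasc m n (act p x) =
      actm (masc m n p) (idm x) >> aasc m (tens n p) x >> actm (idm m) (aasc n p x)) /\
  (forall (m : M) (x : C), aasc m munit x >> actm (idm m) (alam x) = actm (mrho m) (idm x)) /\
  (forall (m : M) (x : C), aasc munit m x >> alam (act m x) = actm (mlam m) (idm x)).

Definition selfAct (M : MonCat) : Act M :=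
  {| acat := mcat M; act := @tens M; actm := @tensm M;
     alam := @mlam M; alami := @mlami M; aasc := @masc M; aasci := @masci M |}.

Inductive eqv_clos (T : Type) (R : T -> T -> Prop) : T -> T -> Prop :=
| eqv_base : forall x y, R x y -> eqv_clos R x y
| eqv_refl : forall x, eqv_clos R x x
| eqv_sym : forall x y, eqv_clos R x y -> eqv_clos R y x
| eqv_trans : forall x y z, eqv_clos R x y -> eqv_clos R y z -> eqv_clos R x z.

Definition Quot (T : Type) (R : T -> T -> Prop) : Type :=
  { P : T -> Prop | exists x, P = eqv_clos R x }.

Definition qpi (T : Type) (R : T -> T -> Prop) (x : T) : Quot R :=
  exist _ (eqv_clos R x) (ex_intro _ x eq_refl).

(* a chosen representative; maps out of a quotient are defined on it *)
Definition qrepr (T : Type) (R : T -> T -> Prop) (q : Quot R) : T :=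
  proj1_sig (constructive_indefinite_description _ (proj2_sig q)).

Record Prof (C D : Cat) := {
  pob :> C -> D -> Type;
  plm : forall (c' c : C) (d : D), hom c' c -> pob c d -> pob c' d;
  prm : forall (c : C) (d d' : D), hom d d' -> pob c d -> pob c d'
}.
Arguments plm {C D p c' c d} _ _.
Arguments prm {C D p c d d'} _ _.

(* representatives of  \int^d P(c,d) x Q(d,e) *)
Definition ctriple (C D E : Cat) (P : Prof C D) (Q : Prof D E) (c : C) (e : E) : Type :=
  { d : D & (P c d * Q d e)%type }.

Inductive crel (C D E : Cat) (P : Prof C D) (Q : Prof D E) (c : C) (e : E) :
    ctriple P Q c e -> ctriple P Q c e -> Prop :=
| crel_intro : forall (d d' : D) (f : hom d d') (p : P c d) (q : Q d' e),
    crel (existT _ d' (prm f p, q)) (existT _ d (p, plm f q)).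

Definition coend (C D E : Cat) (P : Prof C D) (Q : Prof D E) (c : C) (e : E) : Type :=
  Quot (@crel C D E P Q c e).

Definition cpi (C D E : Cat) (P : Prof C D) (Q : Prof D E) (c : C) (e : E)
  (d : D) (p : P c d) (q : Q d e) : coend P Q c e :=
  qpi (@crel C D E P Q c e) (existT _ d (p, q)).
Arguments cpi {C D E} P Q {c e d} p q.

Definition pcomp (C D E : Cat) (P : Prof C D) (Q : Prof D E) : Prof C E :=
  {| pob := fun c e => coend P Q c e;
     plm := fun c' c e h z =>
       let t := qrepr z in
       cpi P Q (plm h (fst (projT2 t))) (snd (projT2 t));
     prm := fun c e e' k z =>
       let t := qrepr z in
       cpi P Q (fst (projT2 t)) (prm k (snd (projT2 t))) |}.

Definition HomP (C : Cat) : Prof C C :=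
  {| pob := fun a b => hom a b;
     plm := fun a' a b h f => h >> f;
     prm := fun a b b' k f => f >> k |}.

Record Tamb (M : MonCat) (C D : Act M) := {
  tprof :> Prof C D;
  tst : forall (m : M) (c : C) (d : D), tprof c d -> tprof (act m c) (act m d)
}.
Arguments tst {M C D t} m {c d} _.

Definition tcomp (M : MonCat) (C D E : Act M) (P : Tamb C D) (Q : Tamb D E) : Tamb C E :=
  {| tprof := pcomp P Q;
     tst := fun m c e z =>
       let t := qrepr z in
       cpi P Q (tst m (fst (projT2 t))) (tst m (snd (projT2 t))) |}.

Definition RProf (M : MonCat) (E : Act M) (x : E) : Prof E M :=
  {| pob := fun c n => hom c (act n x);
     plm := fun c' c n h f => h >> f;
     prm := fun c n n' g f => f >> actm g (idm x) |}.

Definition RTamb (M : MonCat) (E : Act M) (x : E) : Tamb E (selfAct M) :=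
  @Build_Tamb M E (selfAct M) (RProf x)
    (fun m c n (f : hom c (act n x)) => actm (idm m) f >> aasci m n x).

Definition LProf (M : MonCat) (E : Act M) (x : E) : Prof M E :=
  {| pob := fun n c => hom (act n x) c;
     plm := fun n' n c g f => actm g (idm x) >> f;
     prm := fun n c c' k f => f >> k |}.

Definition LTamb (M : MonCat) (E : Act M) (x : E) : Tamb (selfAct M) E :=
  @Build_Tamb M (selfAct M) E (LProf x)
    (fun m n c (f : hom (act n x) c) => aasc m n x >> actm (idm m) f).

Definition Cell (C D : Cat) (P Q : Prof C D) : Type := forall (c : C) (d : D), P c d -> Q c d.

Definition is_natural (C D : Cat) (P Q : Prof C D) (th : Cell P Q) : Prop :=
  (forall (c' c : C) (d : D) (h : hom c' c) (p : P c d), th c' d (plm h p) = plm h (th c d p)) /\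
  (forall (c : C) (d d' : D) (k : hom d d') (p : P c d), th c d' (prm k p) = prm k (th c d p)).

Definition is_tamb_cell (M : MonCat) (C D : Act M) (P Q : Tamb C D) (th : Cell P Q) : Prop :=
  is_natural th /\
  (forall (m : M) (c : C) (d : D) (p : P c d), th _ _ (tst m p) = tst m (th c d p)).

Definition idc (C D : Cat) (P : Prof C D) : Cell P P := fun c d p => p.
Arguments idc {C D} P _ _ _.

Definition hcomp (C D E : Cat) (P P' : Prof C D) (Q Q' : Prof D E)
  (s : Cell P P') (t : Cell Q Q') : Cell (pcomp P Q) (pcomp P' Q') :=
  fun c e z =>
    let w := qrepr z in
    cpi P' Q' (s c _ (fst (projT2 w))) (t _ e (snd (projT2 w))).

Arguments hcomp {C D E P P' Q Q'} s t c d _.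

Definition assoc (B C D E : Cat) (P : Prof B C) (Q : Prof C D) (R : Prof D E) :
  Cell (pcomp (pcomp P Q) R) (pcomp P (pcomp Q R)) :=
  fun b e z =>
    let w := qrepr z in
    let v := qrepr (fst (projT2 w)) in
    cpi P (pcomp Q R) (fst (projT2 v)) (cpi Q R (snd (projT2 v)) (snd (projT2 w))).

Definition assoc_inv (B C D E : Cat) (P : Prof B C) (Q : Prof C D) (R : Prof D E) :
  Cell (pcomp P (pcomp Q R)) (pcomp (pcomp P Q) R) :=
  fun b e z =>
    let w := qrepr z in
    let v := qrepr (snd (projT2 w)) in
    cpi (pcomp P Q) R (cpi P Q (fst (projT2 w)) (fst (projT2 v))) (snd (projT2 v)).

Arguments assoc {B C D E} P Q R _ _ _.
Arguments assoc_inv {B C D E} P Q R _ _ _.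

Definition lunit (C D : Cat) (P : Prof C D) : Cell (pcomp (HomP C) P) P :=
  fun c d z => let w := qrepr z in plm (fst (projT2 w)) (snd (projT2 w)).
Arguments lunit {C D} P _ _ _.

Definition Rcell (M : MonCat) (E : Act M) (x x' : E) (f : hom x x') :
  Cell (RProf x) (RProf x') := fun c n g => g >> actm (idm n) f.

Definition Lcell (M : MonCat) (E : Act M) (x x' : E) (f : hom x x') :
  Cell (LProf x') (LProf x) := fun n c g => actm (idm n) f >> g.

Arguments Rcell {M E x x'} f c d _.
Arguments Lcell {M E x x'} f c d _.

Definition counit (M : MonCat) (m : M) :
  Cell (pcomp (RProf (E := selfAct M) m) (LProf (E := selfAct M) m)) (HomP M) :=
  fun k k' z => let w := qrepr z in (fst (projT2 w) : hom k (tens _ m)) >> snd (projT2 w).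

Arguments counit {M} m c d _.

Definition phiR (M : MonCat) (C : Act M) (m : M) (y : C) :
  Cell (pcomp (RProf y) (RProf (E := selfAct M) m)) (RProf (act m y)) :=
  fun c k z =>
    let w := qrepr z in
    fst (projT2 w) >> actm (snd (projT2 w) : hom _ (tens k m)) (idm y) >> aasc k m y.

Arguments phiR {M C} m y c d _.

Definition phiL (M : MonCat) (D : Act M) (m : M) (v : D) :
  Cell (pcomp (LProf (E := selfAct M) m) (LProf v)) (LProf (act m v)) :=
  fun k d z =>
    let w := qrepr z in
    aasci k m v >> actm (fst (projT2 w) : hom (tens k m) _) (idm v) >> snd (projT2 w).

Arguments phiL {M D} m v c d _.

Definition optic (M : MonCat) (C D : Act M) (x y : C) (u v : D) (m : M)
  (al : hom x (act m y)) (be : hom (act m v) u) : coend (RProf y) (LProf v) x u :=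
  cpi (RProf y) (LProf v) (d := m) al be.

Definition id_optic (M : MonCat) (C D : Act M) (x : C) (u : D) :
  coend (RProf x) (LProf u) x u :=
  cpi (RProf x) (LProf u) (d := munit) (alami x) (alam u).

(* The composite 2-cell of the statement, with the bracketing
   R_y (x) ((R_m (x) L_m) (x) L_v) for the middle step; psiR, psiL are the
   inverses of the isomorphisms phiR, phiL. *)
Definition composite (M : MonCat) (C D : Act M) (x y : C) (u v : D) (m : M)
  (al : hom x (act m y)) (be : hom (act m v) u)
  (psiR : Cell (RProf (act m y)) (pcomp (RProf y) (RProf (E := selfAct M) m)))
  (psiL : Cell (LProf (act m v)) (pcomp (LProf (E := selfAct M) m) (LProf v))) :
  Cell (pcomp (RProf x) (LProf u)) (pcomp (RProf y) (LProf v)) :=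
  fun c d z =>
    hcomp (idc (RProf y)) (lunit (LProf v)) c d
   (hcomp (idc (RProf y)) (hcomp (counit m) (idc (LProf v))) c d
   (hcomp (idc (RProf y)) (assoc_inv (RProf (E := selfAct M) m) (LProf (E := selfAct M) m) (LProf v)) c d
   (assoc (RProf y) (RProf (E := selfAct M) m) (pcomp (LProf (E := selfAct M) m) (LProf v)) c d
   (hcomp psiR psiL c d
   (hcomp (Rcell al) (Lcell be) c d z))))).
Arguments composite {M C D x y u v m} al be psiR psiL c d _.

(* A 2-cell of Tambara modules out of R_x (x) L_u is determined by its value on
   the identity optic (a Yoneda argument): the strength at n sends the identity
   optic to <rho^-1 | rho>_(n (x) I), and pre- and postcomposing with f and g
   turns this into an arbitrary generator <f | g>_n.  So it suffices to compare
   both 2-cells on <f | g>_n.  The given one yields the action of the strength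
   on <alpha | beta>_m, namely <f; (n.alpha); a^-1 | a; (n.beta); g>_(n (x) m).
   The composite yields the same optic once the representative is followed
   through each step; the inverse isomorphisms are forced to be
   psiR h = <h; a^-1 | id> and psiL h = <id | a; h>. *)

From Stdlib Require Import ClassicalEpsilon ProofIrrelevance.
From Stdlib Require Import FunctionalExtensionality PropExtensionality.
Set Implicit Arguments.
Unset Strict Implicit.

Section Quotients.

Variables (T : Type) (R : T -> T -> Prop).

Lemma qpi_eq (a b : T) : eqv_clos R a b -> qpi R a = qpi R b.
Proof.
  intros Hab. apply subset_eq_compat.
  apply functional_extensionality; intro t; apply propositional_extensionality; split.
  - intro Hat. exact (eqv_trans (eqv_sym Hab) Hat).
  - intro Hbt. exact (eqv_trans Hab Hbt).
Qed.

Lemma qpi_qrepr (q : Quot R) : qpi R (qrepr q) = q.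
Proof.
  destruct q as [P HP]. unfold qrepr, qpi.
  destruct (constructive_indefinite_description _ _) as [t Ht].
  apply subset_eq_compat. symmetry. exact Ht.
Qed.

Lemma qrepr_qpi_rel (t : T) : eqv_clos R t (qrepr (qpi R t)).
Proof.
  unfold qrepr. destruct (constructive_indefinite_description _ _) as [t' Ht']; cbn in *.
  assert (Hrefl : eqv_clos R t' t') by apply eqv_refl.
  now rewrite <- Ht' in Hrefl.
Qed.

Lemma qrepr_qpi_invariant (X : Type) (F : T -> X) :
  (forall a b, R a b -> F a = F b) -> forall t, F (qrepr (qpi R t)) = F t.
Proof.
  intros HF t. symmetry.
  induction (qrepr_qpi_rel t); auto. congruence.
Qed.

End Quotients.

Definition actions_commute (C D : Cat) (P : Prof C D) : Prop :=
  forall (c' c : C) (d d' : D) (h : hom c' c) (k : hom d d') (p : P c d),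
    plm h (prm k p) = prm k (plm h p).

Section Coends.

Variables (C D E : Cat) (P : Prof C D) (Q : Prof D E).

Lemma cpi_surj (c : C) (e : E) (z : coend P Q c e) :
  exists d (p : P c d) (q : Q d e), z = cpi P Q p q.
Proof.
  rewrite <- (qpi_qrepr z). destruct (qrepr z) as [d [p q]]. now exists d, p, q.
Qed.

Lemma cpi_glue (c : C) (e : E) (d d' : D) (f : hom d d') (p : P c d) (q : Q d' e) :
  cpi P Q (prm f p) q = cpi P Q p (plm f q).
Proof. apply qpi_eq, eqv_base. constructor. Qed.

(* Maps out of a coend are defined by evaluating at the chosen representative
   [qrepr]; on [cpi p q] this gives back [F d p q] as soon as [F] is dinatural. *)
Lemma coend_elim_cpi (c : C) (e : E) (X : Type) (F : forall d, P c d -> Q d e -> X) :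
  (forall d d' (f : hom d d') p q, F d' (prm f p) q = F d p (plm f q)) ->
  forall d p q,
    (let w := qrepr (cpi P Q p q) in F (projT1 w) (fst (projT2 w)) (snd (projT2 w)))
    = F d p q.
Proof.
  intros HF d p q.
  apply (qrepr_qpi_invariant (F := fun w => F (projT1 w) (fst (projT2 w)) (snd (projT2 w)))).
  intros _ _ []. apply HF.
Qed.

Lemma plm_cpi (HP : actions_commute P) (c' c : C) (e : E) (h : hom c' c) d (p : P c d) (q : Q d e) :
  plm (p := pcomp P Q) h (cpi P Q p q) = cpi P Q (plm h p) q.
Proof.
  apply (coend_elim_cpi (F := fun d p q => cpi P Q (plm h p) q)).
  intros. rewrite HP. apply cpi_glue.
Qed.

Lemma prm_cpi (HQ : actions_commute Q) (c : C) (e e' : E) (k : hom e e') d (p : P c d) (q : Q d e) :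
  prm (p := pcomp P Q) k (cpi P Q p q) = cpi P Q p (prm k q).
Proof.
  apply (coend_elim_cpi (F := fun d p q => cpi P Q p (prm k q))).
  intros. rewrite <- HQ. apply cpi_glue.
Qed.

Lemma pcomp_actions_commute :
  actions_commute P -> actions_commute Q -> actions_commute (pcomp P Q).
Proof.
  intros HP HQ c' c e e' h k z. destruct (cpi_surj z) as (d & p & q & ->).
  now rewrite prm_cpi, !plm_cpi, prm_cpi.
Qed.

End Coends.

Definition lnatural (C D : Cat) (P Q : Prof C D) (s : Cell P Q) : Prop :=
  forall (c' c : C) (d : D) (h : hom c' c) (p : P c d), s c' d (plm h p) = plm h (s c d p).

Definition rnatural (C D : Cat) (P Q : Prof C D) (s : Cell P Q) : Prop :=
  forall (c : C) (d d' : D) (k : hom d d') (p : P c d), s c d' (prm k p) = prm k (s c d p).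

Section InverseCells.

Variables (C D : Cat) (P Q : Prof C D) (s : Cell P Q) (t : Cell Q P).
Arguments s : clear implicits.
Arguments t : clear implicits.
Hypotheses (st : forall c d q, s c d (t c d q) = q) (ts : forall c d p, t c d (s c d p) = p).

Lemma lnatural_inv : lnatural s -> lnatural t.
Proof. intros Hs c' c d h q. rewrite <- (st q) at 1. now rewrite <- Hs, ts. Qed.

Lemma rnatural_inv : rnatural s -> rnatural t.
Proof. intros Hs c d d' k q. rewrite <- (st q) at 1. now rewrite <- Hs, ts. Qed.

End InverseCells.

Lemma idc_lnatural (C D : Cat) (P : Prof C D) : lnatural (idc P).
Proof. now intros ? ? ? ? ?. Qed.

Lemma idc_rnatural (C D : Cat) (P : Prof C D) : rnatural (idc P).
Proof. now intros ? ? ? ? ?. Qed.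

Section Whiskering.

Variables (C D E : Cat) (P P' : Prof C D) (Q Q' : Prof D E) (s : Cell P P') (t : Cell Q Q').
Arguments s : clear implicits.
Arguments t : clear implicits.

Lemma hcomp_cpi (Hs : rnatural s) (Ht : lnatural t) (c : C) (e : E) d (p : P c d) (q : Q d e) :
  hcomp s t c e (cpi P Q p q) = cpi P' Q' (s c d p) (t d e q).
Proof.
  apply (coend_elim_cpi (F := fun d p q => cpi P' Q' (s c d p) (t d e q))).
  intros. rewrite Hs, Ht. apply cpi_glue.
Qed.

Lemma hcomp_lnatural (HP : actions_commute P) (HP' : actions_commute P') :
  rnatural s -> lnatural s -> lnatural t -> lnatural (hcomp s t).
Proof.
  intros Hsr Hsl Ht c' c e h z. destruct (cpi_surj z) as (d & p & q & ->).
  now rewrite plm_cpi, !hcomp_cpi, plm_cpi, Hsl.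
Qed.

End Whiskering.

Section Associator.

Variables (B C D E : Cat) (P : Prof B C) (Q : Prof C D) (R : Prof D E).
Hypotheses (HP : actions_commute P) (HQ : actions_commute Q).

Lemma assoc_cpi (b : B) (e : E) c d (p : P b c) (q : Q c d) (r : R d e) :
  assoc P Q R b e (cpi (pcomp P Q) R (cpi P Q p q) r) = cpi P (pcomp Q R) p (cpi Q R q r).
Proof.
  assert (inner : forall d (r : R d e) c (p : P b c) (q : Q c d),
    (let v := qrepr (cpi P Q p q) in
     cpi P (pcomp Q R) (fst (projT2 v)) (cpi Q R (snd (projT2 v)) r))
    = cpi P (pcomp Q R) p (cpi Q R q r)).
  { intros d' r' c' p' q'.
    apply (coend_elim_cpi (F := fun c p q => cpi P (pcomp Q R) p (cpi Q R q r'))).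
    intros. now rewrite cpi_glue, plm_cpi. }
  unfold assoc. etransitivity; [| apply inner].
  apply (coend_elim_cpi (F := fun d (w : pcomp P Q b d) (r : R d e) =>
    let v := qrepr w in cpi P (pcomp Q R) (fst (projT2 v)) (cpi Q R (snd (projT2 v)) r))).
  intros d1 d2 f w r'. destruct (cpi_surj w) as (c' & p' & q' & ->).
  rewrite (prm_cpi HQ). cbv zeta. rewrite !inner. now rewrite cpi_glue.
Qed.

Lemma assoc_inv_cpi (b : B) (e : E) c d (p : P b c) (q : Q c d) (r : R d e) :
  assoc_inv P Q R b e (cpi P (pcomp Q R) p (cpi Q R q r)) = cpi (pcomp P Q) R (cpi P Q p q) r.
Proof.
  assert (inner : forall c (p : P b c) d (q : Q c d) (r : R d e),
    (let v := qrepr (cpi Q R q r) in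
     cpi (pcomp P Q) R (cpi P Q p (fst (projT2 v))) (snd (projT2 v)))
    = cpi (pcomp P Q) R (cpi P Q p q) r).
  { intros c' p' d' q' r'.
    apply (coend_elim_cpi (F := fun d q r => cpi (pcomp P Q) R (cpi P Q p' q) r)).
    intros. now rewrite <- cpi_glue, prm_cpi. }
  unfold assoc_inv. etransitivity; [| apply inner].
  apply (coend_elim_cpi (F := fun c (p : P b c) (w : pcomp Q R c e) =>
    let v := qrepr w in cpi (pcomp P Q) R (cpi P Q p (fst (projT2 v))) (snd (projT2 v)))).
  intros c1 c2 f p' w. destruct (cpi_surj w) as (d' & q' & r' & ->).
  rewrite (plm_cpi HQ). cbv zeta. rewrite !inner. now rewrite cpi_glue.
Qed.

Lemma assoc_inv_lnatural : lnatural (assoc_inv P Q R).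
Proof.
  intros b' b e h z. destruct (cpi_surj z) as (c & p & w & ->).
  destruct (cpi_surj w) as (d & q & r & ->).
  now rewrite plm_cpi, !assoc_inv_cpi, !plm_cpi by auto using pcomp_actions_commute.
Qed.

End Associator.

Section CategoryLemmas.

Variables (C : Cat) (HC : is_cat C).

Lemma id_comp (a b : C) (f : hom a b) : idm a >> f = f.
Proof. apply HC. Qed.

Lemma comp_id (a b : C) (f : hom a b) : f >> idm b = f.
Proof. apply HC. Qed.

Lemma comp_assoc (a b c d : C) (f : hom a b) (g : hom b c) (h : hom c d) :
  f >> g >> h = f >> (g >> h).
Proof. apply HC. Qed.

Lemma inv_comp (a b c : C) (f : hom a b) (g : hom b c) (h : hom a c)
  (f' : hom b a) (g' : hom c b) (h' : hom c a) :
  f >> g = h -> f >> f' = idm a -> g >> g' = idm b -> h' >> h = idm c -> g' >> f' = h'.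
Proof.
  intros Hh Hf Hg Hh'.
  rewrite <- (id_comp (g' >> f')), <- Hh', <- Hh, !comp_assoc.
  rewrite <- (comp_assoc g g'), Hg, id_comp, Hf. apply comp_id.
Qed.

Lemma inv_natural (a b a' b' : C) (s : hom a b) (s' : hom a' b') (si : hom b a) (si' : hom b' a')
  (u : hom a a') (v : hom b b') :
  u >> s' = s >> v -> si >> s = idm b -> s' >> si' = idm a' -> si >> u = v >> si'.
Proof.
  intros Hsq Hs Hs'.
  rewrite <- (comp_id (si >> u)), <- Hs', <- comp_assoc, (comp_assoc si), Hsq.
  now rewrite <- comp_assoc, Hs, id_comp.
Qed.

End CategoryLemmas.

Lemma moncat_cat (M : MonCat) : is_moncat M -> is_cat M.
Proof. intros HM; apply HM. Qed.

Lemma act_cat (M : MonCat) (E : Act M) : is_act E -> is_cat E.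
Proof. intros HE; apply HE. Qed.

Lemma RProf_actions_commute (M : MonCat) (E : Act M) (HE : is_cat E) (x : E) :
  actions_commute (RProf x).
Proof. intros c' c n n' h k p. symmetry. apply (comp_assoc HE). Qed.

Lemma LProf_actions_commute (M : MonCat) (E : Act M) (HE : is_cat E) (x : E) :
  actions_commute (LProf x).
Proof. intros n' n c c' h k p. symmetry. apply (comp_assoc HE). Qed.

Lemma HomP_actions_commute (C : Cat) (HC : is_cat C) : actions_commute (HomP C).
Proof. intros c' c d d' h k p. symmetry. apply (comp_assoc HC). Qed.

Definition strength_rnatural (M : MonCat) (C D : Act M) (P : Tamb C D) : Prop :=
  forall (n : M) (c : C) (d d' : D) (f : hom d d') (p : P c d),
    tst n (prm f p) = prm (actm (idm n) f) (tst n p).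

Definition strength_lnatural (M : MonCat) (C D : Act M) (P : Tamb C D) : Prop :=
  forall (n : M) (c' c : C) (d : D) (f : hom c' c) (p : P c d),
    tst n (plm f p) = plm (actm (idm n) f) (tst n p).

Lemma tcomp_tst_cpi (M : MonCat) (C D E : Act M) (P : Tamb C D) (Q : Tamb D E) :
  strength_rnatural P -> strength_lnatural Q ->
  forall (n : M) (c : C) (e : E) d (p : P c d) (q : Q d e),
    tst (t := tcomp P Q) n (cpi P Q p q) = cpi P Q (tst n p) (tst n q).
Proof.
  intros HP HQ n c e d p q.
  apply (coend_elim_cpi (F := fun d (p : P c d) (q : Q d e) => cpi P Q (tst n p) (tst n q))).
  intros. now rewrite HP, HQ, cpi_glue.
Qed.

Section Actegory.

Variables (M : MonCat) (E : Act M) (HM : is_moncat M) (HE : is_act E).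

Let HMc : is_cat M := moncat_cat HM.
Let HEc : is_cat E := act_cat HE.

Lemma mrhoi_mrho (n : M) : mrhoi n >> mrho n = idm n.
Proof. apply HM. Qed.

Lemma actm_id (n : M) (x : E) : actm (idm n) (idm x) = idm (act n x).
Proof. apply HE. Qed.

Lemma actm_comp (n n' n'' : M) (x x' x'' : E)
  (f : hom n n') (f' : hom n' n'') (g : hom x x') (g' : hom x' x'') :
  actm (f >> f') (g >> g') = actm f g >> actm f' g'.
Proof. apply HE. Qed.

Lemma actm_compl (n n' n'' : M) (x : E) (f : hom n n') (f' : hom n' n'') :
  actm (f >> f') (idm x) = actm f (idm x) >> actm f' (idm x).
Proof. now rewrite <- actm_comp, (id_comp HEc). Qed.

Lemma actm_compr (n : M) (x x' x'' : E) (g : hom x x') (g' : hom x' x'') :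
  actm (idm n) (g >> g') = actm (idm n) g >> actm (idm n) g'.
Proof. now rewrite <- actm_comp, (id_comp HMc). Qed.

Lemma actm_interchange (n n' : M) (x x' : E) (f : hom n n') (g : hom x x') :
  actm f (idm x) >> actm (idm n') g = actm (idm n) g >> actm f (idm x').
Proof.
  now rewrite <- !actm_comp, (id_comp HMc), (id_comp HEc), (comp_id HMc), (comp_id HEc).
Qed.

Lemma aasc_aasci (n k : M) (x : E) : aasc n k x >> aasci n k x = idm _.
Proof. apply HE. Qed.

Lemma aasci_aasc (n k : M) (x : E) : aasci n k x >> aasc n k x = idm _.
Proof. apply HE. Qed.

Lemma aasc_natural (n n' k k' : M) (x x' : E) (f : hom n n') (g : hom k k') (h : hom x x') :
  actm (tensm f g) h >> aasc n' k' x' = aasc n k x >> actm f (actm g h).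
Proof. apply HE. Qed.

Lemma aasci_natural (n n' k k' : M) (x x' : E) (f : hom n n') (g : hom k k') (h : hom x x') :
  aasci n k x >> actm (tensm f g) h = actm f (actm g h) >> aasci n' k' x'.
Proof. eapply inv_natural; eauto using aasc_natural, aasci_aasc, aasc_aasci. Qed.

Lemma aasc_unit_r (n : M) (x : E) :
  aasc n munit x >> actm (idm n) (alam x) = actm (mrho n) (idm x).
Proof. apply HE. Qed.

Lemma aasci_unit_r (n : M) (x : E) :
  actm (idm n) (alami x) >> aasci n munit x = actm (mrhoi n) (idm x).
Proof.
  apply (inv_comp HEc (aasc_unit_r n x)); [apply aasc_aasci | |].
  - rewrite <- actm_compr, <- actm_id. f_equal. apply HE.
  - now rewrite <- actm_compl, mrhoi_mrho, actm_id.
Qed.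

Lemma Rcell_rnatural (x x' : E) (f : hom x x') : rnatural (Rcell f).
Proof.
  intros c n n' k p. unfold Rcell; simpl.
  now rewrite !(comp_assoc HEc), actm_interchange.
Qed.

Lemma Lcell_lnatural (x x' : E) (f : hom x x') : lnatural (Lcell f).
Proof.
  intros n' n c h p. unfold Lcell; simpl.
  now rewrite <- !(comp_assoc HEc), actm_interchange.
Qed.

Lemma lunit_cpi (v : E) (k n : M) (d : E) (h : hom k n) (q : hom (act n v) d) :
  lunit (LProf v) k d (cpi (HomP M) (LProf v) h q) = actm h (idm v) >> q.
Proof.
  apply (coend_elim_cpi (F := fun n (h : HomP M k n) (q : LProf v n d) => actm h (idm v) >> q)).
  intros. simpl. now rewrite actm_compl, (comp_assoc HEc).
Qed.

Lemma lunit_lnatural (v : E) : lnatural (lunit (LProf v)).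
Proof.
  intros k' k d h z. destruct (cpi_surj z) as (n & g & q & ->).
  rewrite (plm_cpi (Q := LProf v) (HomP_actions_commute HMc)).
  rewrite (lunit_cpi (plm h g) q), lunit_cpi; simpl. now rewrite actm_compl, (comp_assoc HEc).
Qed.

Section RepresentableIsomorphisms.

Variables (m : M) (y : E).

Lemma phiR_cpi (c : E) (k n : M) (h : hom c (act n y)) (g : hom n (tens k m)) :
  phiR m y c k (cpi (RProf y) (RProf (E := selfAct M) m) h g)
  = h >> actm g (idm y) >> aasc k m y.
Proof.
  apply (coend_elim_cpi (F := fun n (h : RProf y c n) (g : RProf (E := selfAct M) m n k) =>
    h >> actm g (idm y) >> aasc k m y)).
  intros. simpl. now rewrite actm_compl, (comp_assoc HEc p).
Qed.

Lemma phiR_rnatural : rnatural (phiR m y).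
Proof.
  intros c k k' f z. destruct (cpi_surj z) as (n & h & g & ->).
  rewrite prm_cpi by apply (RProf_actions_commute (E := selfAct M) HMc).
  simpl. rewrite !phiR_cpi, actm_compl, !(comp_assoc HEc).
  now rewrite aasc_natural, actm_id.
Qed.

Lemma psiR_cpi (psiR : Cell (RProf (act m y)) (pcomp (RProf y) (RProf (E := selfAct M) m)))
  (HpsiR : forall c k z, psiR c k (phiR m y c k z) = z)
  (c : E) (k : M) (f : hom c (act k (act m y))) :
  psiR c k f = cpi (RProf y) (RProf (E := selfAct M) m) (f >> aasci k m y) (idm (tens k m)).
Proof.
  rewrite <- HpsiR, phiR_cpi. f_equal.
  now rewrite actm_id, (comp_id HEc), (comp_assoc HEc), aasci_aasc, (comp_id HEc).
Qed.

Lemma phiL_cpi (k n : M) (d : E) (g : hom (tens k m) n) (h : hom (act n y) d) :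
  phiL m y k d (cpi (LProf (E := selfAct M) m) (LProf y) g h)
  = aasci k m y >> actm g (idm y) >> h.
Proof.
  apply (coend_elim_cpi (F := fun n (g : LProf (E := selfAct M) m k n) (h : LProf y n d) =>
    aasci k m y >> actm g (idm y) >> h)).
  intros. simpl. now rewrite actm_compl, !(comp_assoc HEc).
Qed.

Lemma phiL_lnatural : lnatural (phiL m y).
Proof.
  intros k' k d f z. destruct (cpi_surj z) as (n & g & h & ->).
  rewrite plm_cpi by apply (LProf_actions_commute (E := selfAct M) HMc).
  simpl. rewrite !phiL_cpi, actm_compl, <- !(comp_assoc HEc).
  now rewrite aasci_natural, actm_id.
Qed.

Lemma psiL_cpi (psiL : Cell (LProf (act m y)) (pcomp (LProf (E := selfAct M) m) (LProf y)))
  (HpsiL : forall k d z, psiL k d (phiL m y k d z) = z)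
  (k : M) (d : E) (f : hom (act k (act m y)) d) :
  psiL k d f = cpi (LProf (E := selfAct M) m) (LProf y) (idm (tens k m)) (aasc k m y >> f).
Proof.
  rewrite <- HpsiL, phiL_cpi. f_equal.
  now rewrite actm_id, (comp_id HEc), <- (comp_assoc HEc), aasci_aasc, (id_comp HEc).
Qed.

End RepresentableIsomorphisms.

Lemma RTamb_strength_rnatural (x : E) : strength_rnatural (RTamb x).
Proof.
  intros n c k k' f p. simpl.
  now rewrite actm_compr, !(comp_assoc HEc), aasci_natural.
Qed.

Lemma LTamb_strength_lnatural (x : E) : strength_lnatural (LTamb x).
Proof.
  intros n k' k d f p. simpl.
  now rewrite actm_compr, <- !(comp_assoc HEc), aasc_natural.
Qed.

End Actegory.

Section Counit.

Variables (M : MonCat) (HM : is_moncat M) (m : M).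

Let HMc : is_cat M := moncat_cat HM.

Lemma counit_cpi (k k' n : M) (a : hom k (tens n m)) (b : hom (tens n m) k') :
  counit m k k' (cpi (RProf (E := selfAct M) m) (LProf (E := selfAct M) m) a b) = a >> b.
Proof.
  apply (coend_elim_cpi (F := fun n (a : RProf (E := selfAct M) m k n)
                                   (b : LProf (E := selfAct M) m n k') => a >> b)).
  intros. apply (comp_assoc HMc).
Qed.

Lemma counit_rnatural : rnatural (counit m).
Proof.
  intros k k' k'' f z. destruct (cpi_surj z) as (n & a & b & ->).
  rewrite prm_cpi by apply (LProf_actions_commute (E := selfAct M) HMc).
  rewrite !counit_cpi. symmetry. apply (comp_assoc HMc).
Qed.

Lemma counit_lnatural : lnatural (counit m).
Proof.
  intros k' k k'' f z. destruct (cpi_surj z) as (n & a & b & ->).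
  rewrite plm_cpi by apply (RProf_actions_commute (E := selfAct M) HMc).
  rewrite !counit_cpi. apply (comp_assoc HMc).
Qed.

End Counit.

Section IdentityOptic.

Variables (M : MonCat) (C D : Act M) (HM : is_moncat M) (HC : is_act C) (HD : is_act D).
Variables (x : C) (u : D).

Let RL := tcomp (RTamb x) (LTamb u).

Lemma tst_id_optic (n : M) :
  tst (t := RL) n (id_optic x u)
  = cpi (RProf x) (LProf u) (actm (mrhoi n) (idm x)) (actm (mrho n) (idm u)).
Proof.
  unfold id_optic, RL.
  rewrite (tcomp_tst_cpi (RTamb_strength_rnatural (x := x) HM HC)
                         (LTamb_strength_lnatural (x := u) HM HD)).
  simpl. now rewrite aasci_unit_r, aasc_unit_r.
Qed.

Lemma cpi_from_id_optic (c : C) (d : D) (n : M) (f : hom c (act n x)) (g : hom (act n u) d) :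
  cpi (RProf x) (LProf u) f g
  = prm (p := RL) g (plm (p := RL) f (tst (t := RL) n (id_optic x u))).
Proof.
  rewrite tst_id_optic. unfold RL; simpl tprof.
  rewrite plm_cpi by apply (RProf_actions_commute (act_cat HC)).
  rewrite prm_cpi by apply (LProf_actions_commute (act_cat HD)).
  rewrite (cpi_glue (P := RProf x) (Q := LProf u) (mrhoi n) f). f_equal. simpl.
  rewrite <- (comp_assoc (act_cat HD)), <- actm_compl, mrhoi_mrho, actm_id by assumption.
  symmetry. apply (id_comp (act_cat HD)).
Qed.

Lemma tamb_cell_cpi (Q : Tamb C D) (th : Cell RL Q) (Hth : is_tamb_cell th)
  (c : C) (d : D) (n : M) (f : hom c (act n x)) (g : hom (act n u) d) :
  th c d (cpi (RProf x) (LProf u) f g) = prm g (plm f (tst n (th x u (id_optic x u)))).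
Proof.
  destruct Hth as [[Hl Hr] Hs].
  now rewrite cpi_from_id_optic, Hr, Hl, Hs.
Qed.

End IdentityOptic.

Section Composite.

Variables (M : MonCat) (C D : Act M) (HM : is_moncat M) (HC : is_act C) (HD : is_act D).
Variables (m : M) (y : C) (v : D).
Variables (psiR : Cell (RProf (act m y)) (pcomp (RProf y) (RProf (E := selfAct M) m)))
          (psiL : Cell (LProf (act m v)) (pcomp (LProf (E := selfAct M) m) (LProf v))).
Arguments psiR : clear implicits.
Arguments psiL : clear implicits.
Hypotheses (HpsiR1 : forall c k w, phiR m y c k (psiR c k w) = w)
           (HpsiR2 : forall c k z, psiR c k (phiR m y c k z) = z)
           (HpsiL1 : forall k d w, phiL m v k d (psiL k d w) = w)
           (HpsiL2 : forall k d z, psiL k d (phiL m v k d z) = z).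

Let HRm : actions_commute (RProf (E := selfAct M) m) :=
  RProf_actions_commute (E := selfAct M) (x := m) (moncat_cat HM).
Let HLm : actions_commute (LProf (E := selfAct M) m) :=
  LProf_actions_commute (E := selfAct M) (x := m) (moncat_cat HM).

Lemma composite_cpi (x : C) (u : D) (al : hom x (act m y)) (be : hom (act m v) u)
  (c : C) (d : D) (n : M) (f : hom c (act n x)) (g : hom (act n u) d) :
  composite al be psiR psiL c d (cpi (RProf x) (LProf u) f g)
  = cpi (RProf y) (LProf v) (f >> actm (idm n) al >> aasci n m y)
                            (aasc n m v >> actm (idm n) be >> g).
Proof.
  assert (psiR_rnatural : rnatural psiR).
  { exact (rnatural_inv HpsiR1 HpsiR2 (phiR_rnatural (m := m) (y := y) HM HC)). }
  assert (psiL_lnatural : lnatural psiL).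
  { exact (lnatural_inv HpsiL1 HpsiL2 (phiL_lnatural (m := m) (y := v) HM HD)). }
  unfold composite.
  rewrite (hcomp_cpi (Rcell_rnatural HM HC al) (Lcell_lnatural HM HD be)).
  rewrite (hcomp_cpi psiR_rnatural psiL_lnatural).
  rewrite (psiR_cpi HC HpsiR2), (psiL_cpi HD HpsiL2).
  rewrite (assoc_cpi HRm).
  rewrite (hcomp_cpi (idc_rnatural (P := RProf y)) (assoc_inv_lnatural HRm HLm)).
  rewrite (assoc_inv_cpi HLm).
  assert (counit_whisker_lnatural : lnatural (hcomp (counit m) (idc (LProf v)))).
  { exact (hcomp_lnatural (pcomp_actions_commute HRm HLm) (HomP_actions_commute (moncat_cat HM))
             (counit_rnatural (m := m) HM) (counit_lnatural (m := m) HM)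
             (idc_lnatural (P := LProf v))). }
  rewrite (hcomp_cpi (idc_rnatural (P := RProf y)) counit_whisker_lnatural).
  rewrite (hcomp_cpi (counit_rnatural (m := m) HM) (idc_lnatural (P := LProf v))).
  rewrite (counit_cpi HM).
  rewrite (hcomp_cpi (idc_rnatural (P := RProf y)) (lunit_lnatural (v := v) HM HD)).
  rewrite (lunit_cpi HD).
  unfold idc, Rcell, Lcell. f_equal.
  rewrite (id_comp (moncat_cat HM)), (actm_id HD), (id_comp (act_cat HD)).
  symmetry. apply (comp_assoc (act_cat HD)).
Qed.

End Composite.

Theorem mainTheorem8 (M : MonCat) (C D : Act M)
  (HM : is_moncat M) (HC : is_act C) (HD : is_act D)
  (m : M) (x y : C) (u v : D)
  (al : hom x (act m y)) (be : hom (act m v) u)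
  (* th : the 2-cell  R_x (x) L_u => R_y (x) L_v  in Tamb_{C,D} corresponding to
     the optic l = <al | be>_m, i.e. sending the identity optic to l *)
  (th : Cell (pcomp (RProf x) (LProf u)) (pcomp (RProf y) (LProf v)))
  (Hth : @is_tamb_cell M C D (tcomp (RTamb x) (LTamb u)) (tcomp (RTamb y) (LTamb v)) th)
  (Hthl : th x u (id_optic x u) = optic al be)
  (* psiR, psiL : the inverses of the isomorphisms
     R_y (x) R_m ~= R_{m . y}  and  L_m (x) L_v ~= L_{m . v} *)
  (psiR : Cell (RProf (act m y)) (pcomp (RProf y) (RProf (E := selfAct M) m)))
  (psiL : Cell (LProf (act m v)) (pcomp (LProf (E := selfAct M) m) (LProf v)))
  (HpsiR1 : forall c k w, phiR m y c k (psiR c k w) = w)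
  (HpsiR2 : forall c k z, psiR c k (phiR m y c k z) = z)
  (HpsiL1 : forall k d w, phiL m v k d (psiL k d w) = w)
  (HpsiL2 : forall k d z, psiL k d (phiL m v k d z) = z) :
  forall (c : C) (d : D) (z : pcomp (RProf x) (LProf u) c d),
    th c d z = composite al be psiR psiL c d z.
Proof.
  intros c d z. destruct (cpi_surj z) as (n & f & g & ->).
  rewrite (tamb_cell_cpi HM HC HD Hth), Hthl.
  rewrite (composite_cpi HM HC HD HpsiR1 HpsiR2 HpsiL1 HpsiL2).
  unfold optic.
  rewrite (tcomp_tst_cpi (RTamb_strength_rnatural (x := y) HM HC)
                         (LTamb_strength_lnatural (x := v) HM HD)).
  simpl tprof.
  rewrite (plm_cpi (RProf_actions_commute (x := y) (act_cat HC))).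
  rewrite (prm_cpi (LProf_actions_commute (x := v) (act_cat HD))).
  simpl. now rewrite !(comp_assoc (act_cat HC)), !(comp_assoc (act_cat HD)).
Qed.
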